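(* Let $N>0$, $d>0$ be real numbers with $0<N<1$ and $d^{2}>N^{-2}-1$. Let $F(z)=(1-Nz)^{2}\left(1-\frac{d^{2}}{z^{2}-1}\right)$, $\varphi(z)=\frac{1}{d^{2}}+\frac{1-N^{-1}z}{(z^{2}-1)^{2}}$ and $I_{2}=(1,\sqrt{1+d^{2}})$. Then the equation $\varphi(z)=0$ has exactly one root $z_{01}$ in $I_{2}$. Moreover, for real $A>0$, the equation $F(z)+A=0$ (i.e. the quartic equation $(1-Nz)^{2}(z^{2}-1-d^{2})+A(z^{2}-1)=0$ in the complex variable $z$) has four real roots when $0<A\leq -F(z_{01})$, and has two real and two (non-real) complex roots when $A>-F(z_{01})$.
   Context: This is the (dimensionless) dispersion relation for Kelvin–Helmholtz perturbations of two thin co-flowing layers (a pure incompressible fluid and a bubbly fluid): $z=ad/(u_{20}-c)$ with $c$ the phase velocity, $d=1/(bk)$, $N=M/d$ with $M=(u_{20}-u_{10})/a$, and $A=h_0\rho_{20}/((H_0-h_0)\rho_{10})>0$. The equation $F(z)+A=0$ is regarded as the fourth-degree polynomial equation obtained by multiplying by $z^{2}-1$; roots are counted with multiplicity. *)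

From HB Require Import structures.
From mathcomp Require Import all_boot all_order all_algebra.
From mathcomp Require Import complex.
Set Implicit Arguments. Unset Strict Implicit. Unset Printing Implicit Defensive.
Import Order.TTheory GRing.Theory Num.Theory.
Local Open Scope ring_scope.

Definition Ffun (R : rcfType) (N d z : R) : R :=
  (1 - N * z) ^+ 2 * (1 - d ^+ 2 / (z ^+ 2 - 1)).

Definition phifun (R : rcfType) (N d z : R) : R :=
  1 / d ^+ 2 + (1 - N^-1 * z) / (z ^+ 2 - 1) ^+ 2.

(* The quartic (1 - N z)^2 (z^2 - 1 - d^2) + A (z^2 - 1), i.e. F(z) + A = 0
   multiplied by z^2 - 1, as a real polynomial. *)
Definition quartic (R : rcfType) (N d A : R) : {poly R} :=
  (1 - N *: 'X) ^+ 2 * ('X ^+ 2 - (1 + d ^+ 2)%:P) + A *: ('X ^+ 2 - 1).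

Definition complexify (R : rcfType) (p : {poly R}) : {poly R[i]} :=
  map_poly (fun x : R => x%:C%C) p.

(* [p] (over C) has exactly [k] real roots, counted with multiplicity:
   the complete list [s] of complex roots of [p] (with multiplicity)
   contains exactly [k] elements with zero imaginary part. *)
Definition n_real_roots (R : rcfType) (p : {poly R[i]}) (k : nat) : Prop :=
  p != 0 /\
  exists s : seq R[i],
    p = lead_coef p *: \prod_(z <- s) ('X - z%:P) /\
    count (fun z : R[i] => complex.Im z == 0) s = k.

From HB Require Import structures.
From mathcomp Require Import all_boot all_order all_algebra.
From mathcomp Require Import complex polyrcf.
From mathcomp Require Import ring lra.
Set Implicit Arguments. Unset Strict Implicit. Unset Printing Implicit Defensive.
Import Order.TTheory GRing.Theory Num.Theory.
Local Open Scope ring_scope.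

(* Put [K = 1/N] and [s = sqrt (1 + d^2)], so that [1 < K < s].  The numerator
   [h z = N (z^2 - 1)^2 + d^2 (N - z)] of [phi] lies below its chords issued
   from [1] on [[1, +oo)]; as [h 1 < 0] and [h K < 0 < h s], it has a single zero
   [w] in [(1, s)], and [K < w].  The quartic is [Q_A z = (z^2 - 1) (A + F z)] and
   satisfies [(z^2 - 1) Q_A' z = 2 z Q_A z - 2 (1 - N z) h z], so [w] is a double
   root of [Q_M] for [M = - F w], while the roots of [Q_A] in [(1, K)] are simple.
   [Q_A] has roots in [(-s, -1)] and [(1, K)], and for [A < M] also in [(K, w)]
   and [(w, s)].  For [A > M], [Q_A = Q_M + (A - M) (z^2 - 1) > 0] beyond the root
   of [Q_M] in [(1, K)], and [F] is increasing on [(1, K)], so every other real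
   root of [Q_A] is [< -1]; two such roots would make the sum [2/N] of the four
   roots smaller than [K - 3]. *)

Section RealRootCount.
Variable R : rcfType.
Implicit Types (p q : {poly R}) (rs : seq R).

Lemma horner_deriv_mulXsubC q z : (q * ('X - z%:P))^`().[z] = q.[z].
Proof. by rewrite derivM derivXsubC mulr1 !hornerE subrr mulr0 add0r. Qed.

Lemma size_mul_prod_XsubC q rs :
  q != 0 -> size (q * \prod_(r <- rs) ('X - r%:P)) = (size q + size rs)%N.
Proof.
by move=> q0; rewrite size_Mmonic ?monic_prod_XsubC // size_prod_XsubC addnS.
Qed.

Lemma cofactor_prod_XsubC p q rs : p = q * \prod_(r <- rs) ('X - r%:P) ->
  size p = (size rs).+1 -> q = (lead_coef p)%:P.
Proof.
move=> -> sp; have q0 : q != 0.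
  by apply: contra_eq_neq sp => ->; rewrite mul0r size_poly0.
have sq : size q = 1%N.
  by apply/eqP; rewrite -(eqn_add2r (size rs)) -size_mul_prod_XsubC // sp add1n.
by rewrite lead_coef_Mmonic ?monic_prod_XsubC // lead_coefE sq -size1_polyC ?sq.
Qed.

Lemma n_real_roots_complexify p q rs : p = q * \prod_(r <- rs) ('X - r%:P) ->
  q != 0 -> (forall x, ~~ root q x) -> n_real_roots (complexify p) (size rs).
Proof.
move=> -> q0 qNroot; set C := map_poly (real_complex R).
change (n_real_roots (C (q * \prod_(r <- rs) ('X - r%:P))) (size rs)).
have Cp : C (q * \prod_(r <- rs) ('X - r%:P)) =
    C q * \prod_(r <- map (real_complex R) rs) ('X - r%:P).
  rewrite /C rmorphM rmorph_prod big_map; congr (_ * _).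
  by apply: eq_bigr => r _; rewrite /= map_polyXsubC.
have Cq0 : C q != 0 by rewrite map_poly_eq0.
have [s Cq] := closed_field_poly_normal (C q).
have sNreal z : z \in s -> complex.Im z != 0.
  case: z => a b zs; apply: contraNneq (qNroot a) => /= b0; subst b.
  have : root (C q) (a%:C)%C by rewrite Cq rootZ ?lead_coef_eq0 // root_prod_XsubC.
  by rewrite /root horner_map /= -(rmorph0 (real_complex R)) (inj_eq (@complexI _)).
split; first by rewrite Cp mulf_neq0 // monic_neq0 // monic_prod_XsubC.
exists (s ++ map (real_complex R) rs); split.
  by rewrite Cp lead_coef_Mmonic ?monic_prod_XsubC // {1}Cq big_cat -scalerAl.
rewrite count_cat (eq_in_count (a2 := pred0)) ?count_pred0; last first.
  by move=> z /sNreal /negbTE.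
by rewrite count_map -[RHS](count_predT rs); apply: eq_count => r /=; rewrite eqxx.
Qed.

Lemma n_real_roots_split p rs : size p = (size rs).+1 ->
  all (root p) rs -> uniq rs -> n_real_roots (complexify p) (size rs).
Proof.
move=> sp prs urs; have := all_roots_prod_XsubC sp prs; rewrite uniq_rootsE => /(_ urs).
rewrite -mul_polyC => Ep; apply: n_real_roots_complexify Ep _ _ => [|x].
  by rewrite polyC_eq0 lead_coef_eq0 -size_poly_eq0 sp.
by rewrite rootC lead_coef_eq0 -size_poly_eq0 sp.
Qed.

End RealRootCount.

Definition phi_num (R : rcfType) (N d z : R) : R :=
  N * (z ^+ 2 - 1) ^+ 2 + d ^+ 2 * (N - z).

Section Quartic.
Variables (R : rcfType) (N d : R).
Local Notation Q A := (quartic N d A).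
Local Notation h := (phi_num N d).

Lemma horner_quartic A x :
  (Q A).[x] = (1 - N * x) ^+ 2 * (x ^+ 2 - (1 + d ^+ 2)) + A * (x ^+ 2 - 1).
Proof. by rewrite /quartic !hornerE. Qed.

Lemma quarticE A : Q A =
  Poly [:: - (1 + d ^+ 2) - A; 2 * N * (1 + d ^+ 2);
           1 - N ^+ 2 * (1 + d ^+ 2) + A; - (2 * N); N ^+ 2].
Proof.
rewrite /quartic /= !cons_poly_def mul0r add0r.
by rewrite -!mul_polyC !(polyCD, polyCN, polyCM, rmorphXn, polyC1) /=; ring.
Qed.

Lemma horner_quartic_Ffun A z : z ^+ 2 - 1 != 0 ->
  (Q A).[z] = (z ^+ 2 - 1) * (A + Ffun N d z).
Proof. by move=> z0; rewrite horner_quartic /Ffun; field; rewrite z0. Qed.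

Lemma horner_quartic_deriv A z :
  (z ^+ 2 - 1) * (Q A)^`().[z] = 2 * z * (Q A).[z] - 2 * (1 - N * z) * h z.
Proof.
rewrite horner_quartic /quartic !derivE !hornerE /phi_num; ring.
Qed.

Lemma phifun_eq0 z : N != 0 -> d != 0 -> z ^+ 2 - 1 != 0 ->
  (phifun N d z == 0) = (h z == 0).
Proof.
move=> N0 d0 z0; have D0 : N * d ^+ 2 * (z ^+ 2 - 1) ^+ 2 != 0.
  by rewrite !mulf_neq0 ?expf_neq0.
have -> : phifun N d z = h z / (N * d ^+ 2 * (z ^+ 2 - 1) ^+ 2).
  by rewrite /phifun /phi_num; field; rewrite z0 d0 N0.
by rewrite mulf_eq0 invr_eq0 (negbTE D0) orbF.
Qed.

Lemma phi_num_chord u v : 0 <= N -> 1 <= u -> u <= v ->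
  (v - 1) * h u <= (v - u) * h 1 + (u - 1) * h v.
Proof.
move=> N0 u1 uv; rewrite -subr_ge0.
have -> : (v - u) * h 1 + (u - 1) * h v - (v - 1) * h u =
    N * ((u - 1) * (v - 1)) * ((v - 1) * (v + 1) ^+ 2 - (u - 1) * (u + 1) ^+ 2).
  by rewrite /phi_num; ring.
apply: mulr_ge0; first by apply: mulr_ge0; [lra | nra].
by rewrite subr_ge0; apply: ler_pM; [lra | exact: sqr_ge0 | lra | nra].
Qed.

Lemma horner_quartic_sqrt A x : x ^+ 2 = 1 + d ^+ 2 -> (Q A).[x] = A * d ^+ 2.
Proof. by move=> x2; rewrite horner_quartic x2; ring. Qed.

Local Notation K := N^-1.
Local Notation s := (Num.sqrt (1 + d ^+ 2)).

Lemma sqr_sqrt_1d : s ^+ 2 = 1 + d ^+ 2.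
Proof. by rewrite sqr_sqrtr // addr_ge0 ?sqr_ge0. Qed.

Lemma mulN_lt1 z : 0 < N -> (N * z < 1) = (z < K).
Proof. by move=> N_gt0; rewrite -ltr_pdivlMl // mulr1. Qed.

Lemma mulN_gt1 z : 0 < N -> (1 < N * z) = (K < z).
Proof. by move=> N_gt0; rewrite -ltr_pdivrMl // mulr1. Qed.

Lemma invN_lt_sqrt : 0 < N -> N < 1 -> N ^-2 - 1 < d ^+ 2 -> K < s.
Proof.
move=> N_gt0 N_lt1 dN; have K_gt1 : 1 < K by rewrite invf_gt1.
have : K ^+ 2 < s ^+ 2 by rewrite sqr_sqrt_1d exprVn; lra.
have : 0 <= s by exact: sqrtr_ge0.
nra.
Qed.

Lemma phi_num1_lt0 : N < 1 -> 0 < d -> h 1 < 0.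
Proof.
move=> N_lt1 d_gt0; rewrite /phi_num expr1n subrr expr0n /= mulr0 add0r.
by rewrite pmulr_rlt0 ?exprn_gt0 //; lra.
Qed.

Lemma phi_num_invN_lt0 : 0 < N -> N < 1 -> N ^-2 - 1 < d ^+ 2 -> h K < 0.
Proof.
move=> N_gt0 N_lt1 dN; have Ks := invN_lt_sqrt N_gt0 N_lt1 dN.
have K_gt1 : 1 < K by rewrite invf_gt1.
have -> : h K = N * (K ^+ 2 - 1) * (K ^+ 2 - s ^+ 2).
  by rewrite /phi_num sqr_sqrt_1d; field; rewrite gt_eqF.
rewrite pmulr_rlt0; first by rewrite subr_lt0; nra.
by apply: mulr_gt0; nra.
Qed.

Lemma phi_num_sqrt_gt0 : 0 < N -> N < 1 -> 0 < d -> N ^-2 - 1 < d ^+ 2 -> 0 < h s.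
Proof.
move=> N_gt0 N_lt1 d_gt0 dN; have Ks := invN_lt_sqrt N_gt0 N_lt1 dN.
have Ns : 1 < N * s by rewrite mulN_gt1.
have -> : h s = d ^+ 2 * s * (N * s - 1).
  apply/eqP; rewrite -subr_eq0; apply/eqP.
  transitivity (N * (s ^+ 2 - 1) * (s ^+ 2 - (1 + d ^+ 2))).
    by rewrite /phi_num; ring.
  by rewrite sqr_sqrt_1d subrr mulr0.
by apply: mulr_gt0; [rewrite mulr_gt0 ?exprn_gt0 // sqrtr_gt0 ltr_wpDr ?sqr_ge0 | lra].
Qed.

Lemma phi_num_lt0 u v : 0 < N -> N < 1 -> 0 < d ->
  1 < u -> u < v -> h v <= 0 -> h u < 0.
Proof.
move=> N_gt0 N_lt1 d_gt0 u1 uv hv.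
have chord := phi_num_chord (ltW N_gt0) (ltW u1) (ltW uv).
have h1_lt0 : (v - u) * h 1 < 0 by rewrite pmulr_rlt0 ?phi_num1_lt0 // subr_gt0.
have hv_le0 : (u - 1) * h v <= 0 by rewrite pmulr_rle0 // subr_gt0.
have v1 : 0 < v - 1 by lra.
by rewrite -(pmulr_rlt0 _ v1); lra.
Qed.

Lemma phi_num_root_uniq u v : 0 < N -> N < 1 -> 0 < d ->
  1 < u -> 1 < v -> h u = 0 -> h v = 0 -> u = v.
Proof.
move=> N_gt0 N_lt1 d_gt0 u1 v1 hu hv; case: (ltgtP u v) => // [uv | vu].
  by have := phi_num_lt0 N_gt0 N_lt1 d_gt0 u1 uv; rewrite hu hv lexx ltxx => /(_ isT).
by have := phi_num_lt0 N_gt0 N_lt1 d_gt0 v1 vu; rewrite hu hv lexx ltxx => /(_ isT).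
Qed.

Lemma phi_num_root_gt_invN w : 0 < N -> N < 1 -> 0 < d -> N ^-2 - 1 < d ^+ 2 ->
  1 < w -> h w = 0 -> K < w.
Proof.
move=> N_gt0 N_lt1 d_gt0 dN w1 hw; have hK := phi_num_invN_lt0 N_gt0 N_lt1 dN.
rewrite ltNge le_eqVlt; apply/negP => /orP[/eqP wK | wK].
  by move: hK; rewrite -wK hw ltxx.
by have := phi_num_lt0 N_gt0 N_lt1 d_gt0 w1 wK (ltW hK); rewrite hw ltxx.
Qed.

Lemma exists_phi_num_root : 0 < N -> N < 1 -> 0 < d -> N ^-2 - 1 < d ^+ 2 ->
  exists2 w, 1 < w < s & h w = 0.
Proof.
move=> N_gt0 N_lt1 d_gt0 dN.
set p := N *: ('X ^+ 2 - 1) ^+ 2 + d ^+ 2 *: (N%:P - 'X).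
have hp x : p.[x] = h x by rewrite !hornerE /phi_num expr2 mulrA.
have [||w] := @poly_ivtoo _ p 1 s.
- by apply: ltW; apply: lt_trans (invN_lt_sqrt N_gt0 N_lt1 dN); rewrite invf_gt1.
- by rewrite !hp pmulr_llt0 ?phi_num1_lt0 // phi_num_sqrt_gt0.
by rewrite in_itv /= => w1s /rootP; rewrite hp; exists w.
Qed.

Lemma horner_quartic_lt0 A t : 0 < N -> N < 1 -> 0 < d -> 0 <= A ->
  -1 <= t -> t <= 1 -> (Q A).[t] < 0.
Proof.
move=> N_gt0 N_lt1 d_gt0 A_ge0 t_ge t_le; rewrite horner_quartic.
have t2_le1 : t ^+ 2 <= 1 by nra.
have : (1 - N * t) ^+ 2 * (t ^+ 2 - (1 + d ^+ 2)) < 0.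
  rewrite pmulr_rlt0; first by have := exprn_gt0 2 d_gt0; lra.
  by rewrite exprn_gt0 // subr_gt0; nra.
have : A * (t ^+ 2 - 1) <= 0 by apply: mulr_ge0_le0 => //; lra.
lra.
Qed.

Lemma horner_quartic_invN A : N != 0 -> (Q A).[K] = A * (K ^+ 2 - 1).
Proof. by move=> N0; rewrite horner_quartic mulfV // subrr expr0n /= mul0r add0r. Qed.

Lemma exists_quartic_root_lt_m1 A : 0 < N -> N < 1 -> 0 < d -> 0 < A ->
  exists2 r, - s < r < -1 & root (Q A) r.
Proof.
move=> N_gt0 N_lt1 d_gt0 A_gt0.
have s_gt1 : 1 < s by rewrite -{1}sqrtr1 ltr_sqrt ?ltrDl ?exprn_gt0 // ltr_wpDr ?sqr_ge0.
have [||r] := @poly_ivtoo _ (Q A) (- s) (-1); first by rewrite lerN2 ltW.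
  rewrite horner_quartic_sqrt ?sqrrN ?sqr_sqrt_1d // pmulr_rlt0 ?mulr_gt0 ?exprn_gt0 //.
  by apply: horner_quartic_lt0 => //; lra.
by rewrite in_itv /=; exists r.
Qed.

Lemma exists_quartic_root_1_invN A : 0 < N -> N < 1 -> 0 < d -> 0 < A ->
  exists2 r, 1 < r < K & root (Q A) r.
Proof.
move=> N_gt0 N_lt1 d_gt0 A_gt0; have K_gt1 : 1 < K by rewrite invf_gt1.
have [||r] := @poly_ivtoo _ (Q A) 1 K; first exact: ltW.
  rewrite horner_quartic_invN ?lt0r_neq0 // pmulr_llt0; last by apply: mulr_gt0; nra.
  by apply: horner_quartic_lt0 => //; lra.
by rewrite in_itv /=; exists r.
Qed.

(* Between [1] and [N^-1] both factors [(1 - N z)^2] and [d^2 / (z^2 - 1) - 1]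
   of [- F z] are positive and decreasing. *)
Lemma Ffun_lt u v : 0 < N -> N ^-2 - 1 < d ^+ 2 -> 1 < u -> u < v -> v < K ->
  Ffun N d u < Ffun N d v.
Proof.
move=> N_gt0 dN u1 uv vK; rewrite /Ffun.
have Nv : N * v < 1 by rewrite mulN_lt1.
have v2 : v ^+ 2 - 1 < d ^+ 2.
  have : v ^+ 2 < K ^+ 2 by nra.
  by rewrite exprVn; lra.
have u2_gt0 : 0 < u ^+ 2 - 1 by nra.
have v2_gt0 : 0 < v ^+ 2 - 1 by nra.
have Nuv : N * u < N * v by rewrite ltr_pM2l.
have a_lt : (1 - N * v) ^+ 2 < (1 - N * u) ^+ 2 by nra.
have b_gt0 : 0 <= d ^+ 2 / (v ^+ 2 - 1) - 1.
  by rewrite subr_ge0 ler_pdivlMr // mul1r ltW.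
have b_lt : d ^+ 2 / (v ^+ 2 - 1) - 1 < d ^+ 2 / (u ^+ 2 - 1) - 1.
  have d2_gt0 : 0 < d ^+ 2 by lra.
  by rewrite ltrD2r ltr_pM2l // ltf_pV2 ?posrE //; nra.
rewrite -(opprB (d ^+ 2 / _)) -(opprB (d ^+ 2 / (v ^+ 2 - 1))) !mulrN ltrN2.
exact: ltr_pM (sqr_ge0 _) b_gt0 a_lt b_lt.
Qed.

Lemma root_quartic_Ffun A z : z ^+ 2 - 1 != 0 -> root (Q A) z = (Ffun N d z == - A).
Proof.
by move=> z0; rewrite /root horner_quartic_Ffun // mulf_eq0 (negbTE z0) addrC addr_eq0.
Qed.

Lemma quartic_root_1_invN_uniq A u v : 0 < N -> N ^-2 - 1 < d ^+ 2 ->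
  1 < u < K -> 1 < v < K -> root (Q A) u -> root (Q A) v -> u = v.
Proof.
move=> N_gt0 dN /andP[u1 uK] /andP[v1 vK].
have z0 (z : R) : 1 < z -> z ^+ 2 - 1 != 0 by move=> z1; rewrite gt_eqF // subr_gt0; nra.
rewrite !root_quartic_Ffun ?z0 // => /eqP Fu /eqP Fv.
case: (ltgtP u v) => // [uv | vu].
  by have := Ffun_lt N_gt0 dN u1 uv vK; rewrite Fu Fv ltxx.
by have := Ffun_lt N_gt0 dN v1 vu uK; rewrite Fu Fv ltxx.
Qed.

Lemma horner_deriv_quartic_neq0 A z : 0 < N -> N < 1 -> 0 < d -> N ^-2 - 1 < d ^+ 2 ->
  1 < z -> z < K -> root (Q A) z -> (Q A)^`().[z] != 0.
Proof.
move=> N_gt0 N_lt1 d_gt0 dN z1 zK /rootP Qz.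
have hz : h z < 0.
  by apply: (phi_num_lt0 N_gt0 N_lt1 d_gt0 z1 zK); exact/ltW/phi_num_invN_lt0.
have Nz : N * z < 1 by rewrite mulN_lt1.
apply/eqP => Q'z; have := horner_quartic_deriv A z; rewrite Qz Q'z; nra.
Qed.

Lemma size_quartic A : N != 0 -> size (Q A) = 5%N.
Proof. by move=> N0; rewrite quarticE (PolyK (c := 0)) //= expf_neq0. Qed.

Lemma lead_coef_quartic A : N != 0 -> lead_coef (Q A) = N ^+ 2.
Proof. by move=> N0; rewrite lead_coefE size_quartic // quarticE coef_Poly. Qed.

Lemma quartic_root_sum A rs : N != 0 ->
  Q A = (N ^+ 2)%:P * \prod_(r <- rs) ('X - r%:P) -> size rs = 4%N ->
  N * \sum_(r <- rs) r = 2.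
Proof.
move=> N0 /(congr1 (fun p : {poly R} => p`_3)) + rs4.
rewrite coefCM (_ : 3%N = (size rs).-1); last by rewrite rs4.
rewrite coefPn_prod_XsubC ?rs4 //.
rewrite quarticE coef_Poly /= => E; apply: (mulfI N0).
by apply: oppr_inj; rewrite mulrA -expr2 -mulrN -E mulrC.
Qed.

Lemma Ffun_lt0 z : 1 < z -> z < s -> N * z != 1 -> Ffun N d z < 0.
Proof.
move=> z1 zs Nz; have Nz2 : 0 < (1 - N * z) ^+ 2.
  by rewrite lt_def sqr_ge0 andbT sqrf_eq0 subr_eq0 eq_sym.
rewrite /Ffun pmulr_rlt0 // subr_lt0.
have z2 : 0 < z ^+ 2 - 1 by rewrite subr_gt0; nra.
rewrite ltr_pdivlMr // mul1r ltrBlDl -sqr_sqrt_1d.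
by have := sqrtr_ge0 (1 + d ^+ 2); nra.
Qed.

Lemma Ffun_phi_num_root_lt0 w : 0 < N -> N < 1 -> 0 < d -> N ^-2 - 1 < d ^+ 2 ->
  1 < w -> w < s -> h w = 0 -> Ffun N d w < 0.
Proof.
move=> N_gt0 N_lt1 d_gt0 dN w1 ws hw; apply: Ffun_lt0 => //.
have Kw := phi_num_root_gt_invN N_gt0 N_lt1 d_gt0 dN w1 hw.
by rewrite gt_eqF // mulN_gt1.
Qed.

Lemma quartic_double_root_factor w : 0 < N -> N < 1 -> 0 < d -> N ^-2 - 1 < d ^+ 2 ->
  1 < w -> w < s -> h w = 0 -> exists a b, [/\ a < -1, 1 < b, b < K &
    Q (- Ffun N d w) = (N ^+ 2)%:P * \prod_(r <- [:: a; b; w; w]) ('X - r%:P)].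
Proof.
move=> N_gt0 N_lt1 d_gt0 dN w1 ws hw; set M := - Ffun N d w.
have N0 : N != 0 by rewrite gt_eqF.
have Kw := phi_num_root_gt_invN N_gt0 N_lt1 d_gt0 dN w1 hw.
have w0 : w ^+ 2 - 1 != 0 by rewrite gt_eqF // subr_gt0; nra.
have M_gt0 : 0 < M by rewrite oppr_gt0 Ffun_phi_num_root_lt0.
have [a /andP[_ a1] ra] := exists_quartic_root_lt_m1 N_gt0 N_lt1 d_gt0 M_gt0.
have [b /andP[b1 bK] rb] := exists_quartic_root_1_invN N_gt0 N_lt1 d_gt0 M_gt0.
have : root (Q M) w by rewrite root_quartic_Ffun // opprK.
case/factor_theorem=> q1 Eq1.
have : root q1 w.
  apply/rootP; rewrite -horner_deriv_mulXsubC -Eq1.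
  apply: (mulfI w0); rewrite mulr0.
  rewrite horner_quartic_deriv hw (rootP _) ?mulr0 ?subrr //.
  by rewrite root_quartic_Ffun // opprK.
case/factor_theorem=> q2 Eq2.
have EM : Q M = q2 * \prod_(r <- [:: w; w]) ('X - r%:P).
  by rewrite Eq1 Eq2 !big_cons big_nil mulr1 mulrA.
have [||q3 Eq3] := @uniq_roots_prod_XsubC _ q2 [:: a; b].
  by rewrite /= !andbT; apply/andP; split; [move: ra | move: rb];
    rewrite EM rootM root_prod_XsubC !inE orbb => /orP[//|/eqP]; lra.
  by rewrite uniq_rootsE /= inE andbT; apply/eqP; lra.
exists a, b; split => //.
have EM' : Q M = q3 * \prod_(r <- [:: a; b; w; w]) ('X - r%:P).
  by rewrite EM Eq3 -mulrA -big_cat.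
by rewrite {1}EM' (cofactor_prod_XsubC EM') ?size_quartic // lead_coef_quartic.
Qed.

Lemma quartic_four_real_roots w A : 0 < N -> N < 1 -> 0 < d -> N ^-2 - 1 < d ^+ 2 ->
  1 < w -> w < s -> h w = 0 -> 0 < A -> A <= - Ffun N d w ->
  n_real_roots (complexify (Q A)) 4.
Proof.
move=> N_gt0 N_lt1 d_gt0 dN w1 ws hw A_gt0; rewrite le_eqVlt => /orP[/eqP -> | AM].
  have [a [b [_ _ _ EM]]] := quartic_double_root_factor N_gt0 N_lt1 d_gt0 dN w1 ws hw.
  apply: (n_real_roots_complexify EM) => [|x].
    by rewrite polyC_eq0 expf_neq0 ?gt_eqF.
  by rewrite rootC expf_neq0 ?gt_eqF.
have Kw := phi_num_root_gt_invN N_gt0 N_lt1 d_gt0 dN w1 hw.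
have [r1 /andP[_ r1_lt] rr1] := exists_quartic_root_lt_m1 N_gt0 N_lt1 d_gt0 A_gt0.
have [r2 /andP[r2_gt r2_lt] rr2] := exists_quartic_root_1_invN N_gt0 N_lt1 d_gt0 A_gt0.
have Qw : (Q A).[w] < 0.
  have w2 : 0 < w ^+ 2 - 1 by nra.
  by rewrite horner_quartic_Ffun ?gt_eqF // pmulr_rlt0 //; lra.
have QK : 0 < (Q A).[K].
  have K_gt1 : 1 < K by rewrite invf_gt1.
  by rewrite horner_quartic_invN ?gt_eqF // mulr_gt0 //; nra.
have Qs : 0 < (Q A).[s].
  by rewrite horner_quartic_sqrt ?sqr_sqrt_1d // mulr_gt0 ?exprn_gt0.
have [||r3] := @poly_ivtoo _ (Q A) K w; first exact: ltW.
  by rewrite pmulr_rlt0.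
rewrite in_itv /= => /andP[r3_gt r3_lt] rr3.
have [||r4] := @poly_ivtoo _ (Q A) w s; first exact: ltW.
  by rewrite pmulr_llt0.
rewrite in_itv /= => /andP[r4_gt r4_lt] rr4.
apply: (@n_real_roots_split _ _ [:: r1; r2; r3; r4]).
- by rewrite size_quartic ?gt_eqF.
- by rewrite /= rr1 rr2 rr3 rr4.
by apply: lt_sorted_uniq; rewrite /= andbT; apply/and3P; split; lra.
Qed.

Lemma quartic_split_above_critical w A :
  0 < N -> N < 1 -> 0 < d -> N ^-2 - 1 < d ^+ 2 ->
  1 < w -> w < s -> h w = 0 -> - Ffun N d w < A ->
  exists q r1 r2, [/\ Q A = q * \prod_(r <- [:: r1; r2]) ('X - r%:P),
    r1 < -1, r2 < K & forall t, root q t -> t < -1].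
Proof.
move=> N_gt0 N_lt1 d_gt0 dN w1 ws hw MA; set M := - Ffun N d w in MA.
have M_gt0 : 0 < M by rewrite oppr_gt0 Ffun_phi_num_root_lt0.
have A_gt0 : 0 < A by apply: lt_trans MA.
have [a [b [a1 b1 bK EM]]] := quartic_double_root_factor N_gt0 N_lt1 d_gt0 dN w1 ws hw.
have [r1 /andP[_ r1_lt] rr1] := exists_quartic_root_lt_m1 N_gt0 N_lt1 d_gt0 A_gt0.
have [r2 /andP[r2_gt r2_lt] rr2] := exists_quartic_root_1_invN N_gt0 N_lt1 d_gt0 A_gt0.
(* Beyond [b], [Q A] exceeds [Q M = N^2 (X - a) (X - b) (X - w)^2 >= 0]. *)
have Q_gt0 t : b <= t -> 0 < (Q A).[t].
  move=> bt; have -> : (Q A).[t] = (Q M).[t] + (A - M) * (t ^+ 2 - 1).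
    by rewrite !horner_quartic; ring.
  rewrite EM hornerM hornerC horner_prod !big_cons big_nil !hornerXsubC mulr1.
  have : 0 <= N ^+ 2 * ((t - a) * ((t - b) * ((t - w) * (t - w)))).
    have ta : 0 <= t - a by lra.
    have tb : 0 <= t - b by lra.
    by rewrite mulr_ge0 ?sqr_ge0 // !(mulr_ge0 ta, mulr_ge0 tb) // -expr2 sqr_ge0.
  have : 0 < (A - M) * (t ^+ 2 - 1) by rewrite mulr_gt0 ?subr_gt0 //; nra.
  lra.
case/factor_theorem: (rr2) => q2 Eq2.
have q2r2 : q2.[r2] != 0.
  by rewrite -horner_deriv_mulXsubC -Eq2 horner_deriv_quartic_neq0.
have : root q2 r1.
  by move: rr1; rewrite Eq2 rootM root_XsubC => /orP[// | /eqP r12]; lra.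
case/factor_theorem=> q Eq; exists q, r1, r2; split => //.
  by rewrite Eq2 Eq !big_cons big_nil mulr1 mulrA.
move=> t qt; have rt : root (Q A) t by rewrite Eq2 Eq !rootM qt.
have tr2 : t != r2.
  by apply/eqP => tr; move: q2r2; rewrite -tr Eq hornerM (rootP qt) mul0r eqxx.
rewrite ltNge; apply/negP => t_ge.
have [t1 | t1] := lerP t 1.
  by move: rt; rewrite /root lt_eqF // horner_quartic_lt0 // ltW.
have [bt | tb] := lerP b t; first by move: rt; rewrite /root gt_eqF ?Q_gt0.
have tK : t < K by apply: lt_trans bK.
by move: tr2; rewrite (quartic_root_1_invN_uniq N_gt0 dN _ _ rt rr2) ?eqxx ?t1 ?r2_gt.
Qed.

Lemma quartic_two_real_roots w A : 0 < N -> N < 1 -> 0 < d -> N ^-2 - 1 < d ^+ 2 ->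
  1 < w -> w < s -> h w = 0 -> - Ffun N d w < A ->
  n_real_roots (complexify (Q A)) 2.
Proof.
move=> N_gt0 N_lt1 d_gt0 dN w1 ws hw MA; have N0 : N != 0 by rewrite gt_eqF.
have [q [r1 [r2 [EQ r1_lt r2_lt q_roots]]]] :=
  quartic_split_above_critical N_gt0 N_lt1 d_gt0 dN w1 ws hw MA.
have Q0 : Q A != 0 by rewrite -size_poly_eq0 size_quartic.
have q0 : q != 0 by apply: contraNneq Q0 => q0; rewrite EQ q0 mul0r.
apply: (n_real_roots_complexify EQ q0) => x; apply/negP => qx.
(* A real root [x] of the quadratic [q] forces a second one [y]; then the four
   roots sum to [2 / N], while [x, y, r1 < -1] and [r2 < 1 / N]. *)
case/factor_theorem: (qx) => q' Eq'.
have EQ3 : Q A = q' * \prod_(r <- [:: x; r1; r2]) ('X - r%:P).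
  by rewrite EQ Eq' [in RHS]big_cons mulrA.
have q'0 : q' != 0 by apply: contraNneq Q0 => q'0; rewrite EQ3 q'0 mul0r.
have sq' : size q' = 2%N.
  apply/eqP; rewrite -(eqn_add2r 3).
  by rewrite -(size_mul_prod_XsubC [:: x; r1; r2] q'0) -EQ3 size_quartic.
have [y qy] := poly2_root sq'.
case/factor_theorem: (qy) => q'' Eq''.
have EQ4 : Q A = q'' * \prod_(r <- [:: y; x; r1; r2]) ('X - r%:P).
  by rewrite EQ3 Eq'' [in RHS]big_cons mulrA.
have q''E := cofactor_prod_XsubC EQ4 (size_quartic A N0).
rewrite q''E lead_coef_quartic // in EQ4.
have := quartic_root_sum N0 EQ4 erefl.
rewrite !big_cons big_nil addr0 => sum4.
have y_lt : y < -1 by apply: q_roots; rewrite Eq' rootM qy.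
have x_lt := q_roots x qx.
have : N * (y + (x + (r1 + r2))) < N * (K - 3) by rewrite ltr_pM2l //; lra.
by rewrite mulrBr mulfV // sum4; lra.
Qed.
End Quartic.

Theorem proposition2 (R : rcfType) (N d : R) :
  0 < N -> N < 1 -> 0 < d -> d ^+ 2 > N ^-2 - 1 ->
  exists z01 : R,
    [/\ 1 < z01 /\ z01 < Num.sqrt (1 + d ^+ 2),
        phifun N d z01 = 0,
        (forall z : R, 1 < z -> z < Num.sqrt (1 + d ^+ 2) ->
           phifun N d z = 0 -> z = z01) &
        forall A : R, 0 < A ->
          (A <= - Ffun N d z01 ->
             n_real_roots (complexify (quartic N d A)) 4) /\
          (- Ffun N d z01 < A ->
             n_real_roots (complexify (quartic N d A)) 2)].
Proof.
move=> N_gt0 N_lt1 d_gt0 dN.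
have [N0 d0] : N != 0 /\ d != 0 by rewrite !gt_eqF.
have z0 (z : R) : 1 < z -> z ^+ 2 - 1 != 0 by move=> z1; rewrite gt_eqF // subr_gt0; nra.
have [w /andP[w1 ws] hw] := exists_phi_num_root N_gt0 N_lt1 d_gt0 dN.
exists w; split => //.
- by apply/eqP; rewrite phifun_eq0 ?z0 // hw.
- move=> z z1 _ /eqP; rewrite phifun_eq0 ?z0 // => /eqP hz.
  exact: phi_num_root_uniq N_gt0 N_lt1 d_gt0 z1 w1 hz hw.
move=> A A_gt0; split.
  exact: quartic_four_real_roots N_gt0 N_lt1 d_gt0 dN w1 ws hw A_gt0.
exact: quartic_two_real_roots N_gt0 N_lt1 d_gt0 dN w1 ws hw.
Qed.
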